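(* If $B,C\in \mathcal{B}_{A}(\mathcal{H})$, then \begin{align*} d\omega _{A_{0}}^{2}\left( \begin{bmatrix} 0 & B \\ C & 0 \end{bmatrix} \right) &\leq \frac{1}{2}\max \left\{ \omega _{A}\left( \left( C^{\sharp _{A}}C\right) ^{2}+C^{\sharp _{A}}C\right) ,\omega _{A}\left( B^{\sharp _{A}}B+ \left( B^{\sharp _{A}}B\right) ^{2} \right) \right\} \\ &\quad+\frac{1}{2}\max \left\{ \omega _{A}\left( \left( C^{\sharp _{A}}C\right) ^{2}-C^{\sharp _{A}}C\right), \omega _{A}\left( B^{\sharp _{A}}B-\left( B^{\sharp _{A}}B\right) ^{2} \right) \right\} \\ &\quad +\omega _{A_{0}}\left( \begin{bmatrix} 0 & C^{\sharp _{A}}CB \\ B^{\sharp _{A}}BC & 0 \end{bmatrix} \right). \end{align*}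
   Context: $\mathcal{H}$ is a complex Hilbert space and $A\in\mathcal{B}(\mathcal{H})$ is a positive operator; $\langle x,z\rangle_A=\langle Ax,z\rangle$ and $\|z\|_A=\|A^{1/2}z\|$. $\mathcal{B}_A(\mathcal{H})$ denotes the set of bounded operators $S$ on $\mathcal{H}$ admitting an $A$-adjoint; $S^{\sharp_A}=A^{\dagger}S^*A$ is the distinguished $A$-adjoint ($A^\dagger$ the Moore-Penrose inverse). $\omega_A(S)=\sup\{|\langle Sz,z\rangle_A|:\|z\|_A=1\}$ is the $A$-numerical radius. $A_0=\begin{bmatrix} A&0\\0&A\end{bmatrix}$ on $\mathcal{H}\oplus\mathcal{H}$ induces $\langle x,z\rangle_{A_0}=\langle x_1,z_1\rangle_A+\langle x_2,z_2\rangle_A$; $\omega_{A_0}$ is the $A_0$-numerical radius and $d\omega_{A_0}(X)=\sup\{(|\langle Xz,z\rangle_{A_0}|^2+\|Xz\|_{A_0}^4)^{1/2}:\|z\|_{A_0}=1\}$ is the $A_0$-Davis-Wielandt radius. *)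

From HB Require Import structures.
From mathcomp Require Import all_boot all_order all_algebra.
From mathcomp Require Import boolp classical_sets reals.
From mathcomp Require Import complex.
From Stdlib Require Import ClassicalEpsilon.

Set Implicit Arguments.
Unset Strict Implicit.
Unset Printing Implicit Defensive.

Import Order.TTheory GRing.Theory Num.Theory.
Local Open Scope ring_scope.
Local Open Scope classical_set_scope.

Section Hilbert.
Variables (R : realType) (V : lmodType R[i]) (ip : V -> V -> R[i]).

Definition is_inner_product : Prop :=
  (forall (a : R[i]) (x y z : V), ip (a *: x + y) z = a * ip x z + ip y z) /\
  (forall x y : V, ip y x = (ip x y)^*) /\
  (forall x : V, 0 <= ip x x) /\
  (forall x : V, ip x x = 0 -> x = 0).

Definition ipnorm (x : V) : R := Num.sqrt (complex.Re (ip x x)).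

Definition is_complete : Prop :=
  forall u : nat -> V,
    (forall e : R, 0 < e -> exists N : nat, forall m n : nat,
        (N <= m)%N -> (N <= n)%N -> ipnorm (u m - u n) < e) ->
    exists l : V, forall e : R, 0 < e -> exists N : nat, forall n : nat,
        (N <= n)%N -> ipnorm (u n - l) < e.

Definition is_hilbert : Prop := is_inner_product /\ is_complete.

Definition is_linear_op (T : V -> V) : Prop :=
  forall (a : R[i]) (x y : V), T (a *: x + y) = a *: T x + T y.

Definition is_bounded_op (T : V -> V) : Prop :=
  is_linear_op T /\ exists M : R, forall x : V, ipnorm (T x) <= M * ipnorm x.

Definition is_positive_op (A : V -> V) : Prop :=
  is_bounded_op A /\ forall x : V, 0 <= ip (A x) x.

(* the Hilbert-space adjoint S^* (it exists and is unique for bounded S on a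
   Hilbert space; chosen by classical choice) *)
Definition adjoint (S : V -> V) : V -> V :=
  epsilon (inhabits (fun x : V => x))
    (fun T : V -> V => forall x y : V, ip (S x) y = ip x (T y)).

(* Moore-Penrose inverse of A: on its domain R(A) (+) R(A)^perp, A^dagger w is
   the unique u in N(A)^perp with A u = P_{closure R(A)} w, i.e. with
   A u - w orthogonal to R(A).  (Outside the domain the value is irrelevant.) *)
Definition mp_inverse (A : V -> V) (w : V) : V :=
  epsilon (inhabits (0 : V))
    (fun u : V => (forall n : V, A n = 0 -> ip u n = 0) /\
                  (forall z : V, ip (A u - w) (A z) = 0)).

Definition sharpA (A S : V -> V) : V -> V :=
  fun x => mp_inverse A (adjoint S (A x)).

Definition ipA (A : V -> V) (x z : V) : R[i] := ip (A x) z.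
Definition normA (A : V -> V) (z : V) : R := Num.sqrt (complex.Re (ipA A z z)).

Definition in_BA (A S : V -> V) : Prop :=
  is_bounded_op S /\
  exists X : V -> V, is_bounded_op X /\
    forall x y : V, ipA A (S x) y = ipA A x (X y).

Definition omegaA (A S : V -> V) : R :=
  sup [set complex.Re `|ipA A (S z) z| | z in [set z | normA A z = 1]].

Definition ipA0 (A : V -> V) (x z : V * V) : R[i] :=
  ipA A x.1 z.1 + ipA A x.2 z.2.
Definition normA0 (A : V -> V) (z : V * V) : R :=
  Num.sqrt (complex.Re (ipA0 A z z)).

Definition omegaA0 (A : V -> V) (X : V * V -> V * V) : R :=
  sup [set complex.Re `|ipA0 A (X z) z| | z in [set z | normA0 A z = 1]].

Definition dwA0 (A : V -> V) (X : V * V -> V * V) : R :=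
  sup [set Num.sqrt (complex.Re `|ipA0 A (X z) z| ^+ 2 + normA0 A (X z) ^+ 4)
      | z in [set z | normA0 A z = 1]].

End Hilbert.

Definition offdiag (V : Type) (B C : V -> V) : V * V -> V * V :=
  fun z => (B z.2, C z.1).

(* Fix z = (z1, z2) with ||z||_A0 = 1 and put a := [0 B; C 0] z and
   b := (C^#C z1, B^#B z2).  Then <b, z>_A0 = ||a||^2_A0 and
   <a, b>_A0 = <[0 C^#CB; B^#BC 0] z, z>_A0, so Bombieri's inequality
   |<a, z>|^2 + |<b, z>|^2 <= max(||a||^2, ||b||^2) + |<a, b>| bounds the
   Davis-Wielandt quantity at z.  Writing max(x, y) = (x + y + |x - y|) / 2,
   the sum and the difference of ||a||^2 = ||B z2||^2 + ||C z1||^2 and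
   ||b||^2 = ||C^#C z1||^2 + ||B^#B z2||^2 are the quadratic forms of
   (C^#C)^2 +- C^#C at z1 and of B^#B +- (B^#B)^2 at z2, hence bounded by the
   corresponding A-numerical radii.
   Completeness enters only through the projection theorem and the Riesz
   representation, which show that A S^# = A X for every A-adjoint X of S.
   Since [sup] of an unbounded set is 0, the Davis-Wielandt set may be assumed
   bounded; this bounds ||B e||_A and ||C e||_A on A-unit vectors and thereby
   makes the numerical-radius sets bounded too. *)

From mathcomp Require Import all_boot all_order all_algebra.
From mathcomp Require Import boolp classical_sets reals.
From mathcomp Require Import complex.
From mathcomp Require Import ring lra.
From Stdlib Require ClassicalEpsilon.

Set Implicit Arguments.
Unset Strict Implicit.
Unset Printing Implicit Defensive.
Import Order.TTheory GRing.Theory Num.Theory.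
Local Open Scope complex_scope.
Local Open Scope ring_scope.

Section ComplexModulus.
Variable R : realType.
Implicit Types (z : R[i]) (t : R).

Definition cabs z : R := complex.Re `|z|.

Lemma normcE z : `|z| = (cabs z)%:C.
Proof. by case: z. Qed.

Lemma conjC_real t : (t%:C)^* = t%:C.
Proof. exact: conjc_real. Qed.

Lemma cabs_ge0 z : 0 <= cabs z.
Proof. by case: z => a b; apply: sqrtr_ge0. Qed.

Lemma cabs_sqr z : (cabs z ^+ 2)%:C = z * z^*.
Proof. by rewrite rmorphXn /= -normcE normCK. Qed.

Lemma Re_le_cabs z : complex.Re z <= cabs z.
Proof.
case: z => a b; rewrite /cabs /=.
apply: le_trans (ler_norm a) _; rewrite -sqrtr_sqr ler_sqrt ?addr_ge0 ?sqr_ge0 //.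
by rewrite lerDl sqr_ge0.
Qed.

Lemma cabs_real t : cabs t%:C = `|t|.
Proof. by rewrite /cabs /= expr0n /= addr0 sqrtr_sqr. Qed.

Lemma cabs_ge0_real t : 0 <= t -> cabs t%:C = t.
Proof. by move=> t0; rewrite cabs_real ger0_norm. Qed.

Lemma cabs_natr n : cabs n%:R = n%:R.
Proof. by rewrite -(rmorph_nat (@real_complex R)) cabs_ge0_real ?ler0n. Qed.

Lemma cabsM z z' : cabs (z * z') = cabs z * cabs z'.
Proof. by have := normrM z z'; rewrite !normcE -rmorphM /=; case. Qed.

Lemma cabsJ z : cabs z^* = cabs z.
Proof. by case: z => a b; rewrite /cabs /= sqrrN. Qed.

Lemma cabs_eq0 z : cabs z = 0 -> z = 0.
Proof. by move=> h; apply/normr0_eq0; rewrite normcE h. Qed.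

Lemma ge0_complex_real z : 0 <= z -> z = (complex.Re z)%:C.
Proof. by move=> h; have := ger0_Im h; case: z h => a b /= _ ->. Qed.

Lemma ge0_complex_Re z : 0 <= z -> 0 <= complex.Re z.
Proof. by rewrite lecE => /andP[]. Qed.

End ComplexModulus.

(* The discriminant condition [N^2 <= N * (Q * G)] of a nonnegative quadratic
   polynomial in [t], divided by [N]. *)
Lemma quadratic_ge0_le (R : realType) (Q G N : R) : 0 <= Q -> 0 <= G -> 0 <= N ->
  (forall t, 0 <= Q + 2 * t * N + t ^+ 2 * N * G) -> N <= Q * G.
Proof.
move=> hQ hG hN H.
have [->|Np] := eqVneq N 0; first by rewrite mulr_ge0.
have Npos : 0 < N by rewrite lt_def Np hN.
have [G0|Gp] := eqVneq G 0.
  have := H (- (Q + 1) / (2 * N)).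
  rewrite G0 mulr0 addr0.
  have -> : 2 * (- (Q + 1) / (2 * N)) * N = - (Q + 1) by field; rewrite ?Np ?pnatr_eq0.
  lra.
have Gpos : 0 < G by rewrite lt_def Gp hG.
have := H (- G^-1).
have -> : Q + 2 * - G^-1 * N + (- G^-1) ^+ 2 * N * G = (Q * G - N) / G by field.
rewrite pmulr_lge0 ?invr_gt0 //; lra.
Qed.

Lemma sup_ge0 (R : realType) (E : set R) : (forall x, E x -> 0 <= x) -> 0 <= sup E.
Proof.
move=> E_ge0; have [supE|/sup_out ->] := pselect (has_sup E); last by [].
by have [[x Ex] _] := supE; apply: le_trans (E_ge0 x Ex) (sup_upper_bound supE Ex).
Qed.

Lemma sqr_sup_sqrt_le (R : realType) (T : Type) (U : set T) (f : T -> R) r :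
  0 <= r -> (forall z, U z -> f z <= r) ->
  sup [set Num.sqrt (f z) | z in U]%classic ^+ 2 <= r.
Proof.
move=> r_ge0 f_le; set E := [set _ | _ in _]%classic.
have sup_ge0' : 0 <= sup E by apply: sup_ge0 => _ [z _ <-]; exact: sqrtr_ge0.
have : sup E <= Num.sqrt r.
  have [->|/set0P E_neq0] := eqVneq E set0%classic; first by rewrite sup0 sqrtr_ge0.
  by apply: ge_sup => // _ [z Uz <-]; rewrite ler_sqrt // f_le.
by rewrite -(ler_pXn2r (n := 2)) ?nnegrE ?sqrtr_ge0 // sqr_sqrtr.
Qed.

Lemma sesquilinear_diag_eq0 (R : realType) (W : lmodType R[i]) (h : W -> W -> R[i]) :
  (forall a x y z, h (a *: x + y) z = a * h x z + h y z) ->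
  (forall a x y z, h z (a *: x + y) = a^* * h z x + h z y) ->
  (forall w, h w w = 0) -> forall x y, h x y = 0.
Proof.
move=> hl hr h0 x y.
have hD x1 x2 z : h (x1 + x2) z = h x1 z + h x2 z.
  by have := hl 1 x1 x2 z; rewrite scale1r mul1r.
have hrD z y1 y2 : h z (y1 + y2) = h z y1 + h z y2.
  by have := hr 1 y1 y2 z; rewrite scale1r conjC1 mul1r.
have := h0 (x + y); rewrite hD !hrD !h0 add0r addr0 => sym.
have := h0 ('i *: y + x); rewrite hl !hr !h0 conjCi mulr0 add0r addr0 mulNr.
move/eqP; rewrite -mulrBr mulf_eq0 (negbTE (neq0Ci _)) subr_eq0 => /eqP hyx.
by move/eqP: sym; rewrite hyx -mulr2n -mulr_natr mulf_eq0 pnatr_eq0 orbF => /eqP.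
Qed.

Section SemiInnerProduct.
Variables (R : realType) (W : lmodType R[i]) (q : W -> W -> R[i]).

Definition is_semi_inner_product : Prop :=
  (forall a x y z, q (a *: x + y) z = a * q x z + q y z) /\
  (forall x y, q y x = (q x y)^*) /\
  (forall x, 0 <= q x x).

Definition sqnorm (x : W) : R := complex.Re (q x x).

Hypothesis hq : is_semi_inner_product.

Lemma sip_linl a x y z : q (a *: x + y) z = a * q x z + q y z.
Proof. by case: hq. Qed.

Lemma sip_conj x y : q y x = (q x y)^*.
Proof. by case: hq => _ []. Qed.

Lemma sip_ge0 x : 0 <= q x x.
Proof. by case: hq => _ []. Qed.

Lemma sip0l z : q 0 z = 0.
Proof. by have := sip_linl (-1) z z z; rewrite scaleN1r addNr mulN1r addNr. Qed.

Lemma sipDl x y z : q (x + y) z = q x z + q y z.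
Proof. by have := sip_linl 1 x y z; rewrite scale1r mul1r. Qed.

Lemma sipZl a x z : q (a *: x) z = a * q x z.
Proof. by have := sip_linl a x 0 z; rewrite addr0 sip0l addr0. Qed.

Lemma sipNl x z : q (- x) z = - q x z.
Proof. by rewrite -scaleN1r sipZl mulN1r. Qed.

Lemma sipBl x y z : q (x - y) z = q x z - q y z.
Proof. by rewrite sipDl sipNl. Qed.

Lemma sip0r z : q z 0 = 0.
Proof. by rewrite sip_conj sip0l conjC0. Qed.

Lemma sipDr x y z : q z (x + y) = q z x + q z y.
Proof. by rewrite sip_conj sipDl rmorphD /= -!sip_conj. Qed.

Lemma sipZr a x z : q z (a *: x) = a^* * q z x.
Proof. by rewrite sip_conj sipZl rmorphM /= -sip_conj. Qed.

Lemma sipNr x z : q z (- x) = - q z x.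
Proof. by rewrite -scaleN1r sipZr rmorphN1 mulN1r. Qed.

Lemma sipBr x y z : q z (x - y) = q z x - q z y.
Proof. by rewrite sipDr sipNr. Qed.

Lemma sqnorm_ge0 x : 0 <= sqnorm x.
Proof. exact/ge0_complex_Re/sip_ge0. Qed.

Lemma sip_sqnorm x : q x x = (sqnorm x)%:C.
Proof. exact/ge0_complex_real/sip_ge0. Qed.

Lemma sqrt_sqnorm_eq1 x : Num.sqrt (sqnorm x) = 1 <-> sqnorm x = 1.
Proof.
split=> [h|->]; last exact: sqrtr1.
by rewrite -[sqnorm x]sqr_sqrtr ?sqnorm_ge0 // h expr1n.
Qed.

Lemma sqnormZ a x : sqnorm (a *: x) = cabs a ^+ 2 * sqnorm x.
Proof. by rewrite /sqnorm sipZl sipZr sip_sqnorm mulrA -cabs_sqr -rmorphM. Qed.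

Lemma sqnormN x : sqnorm (- x) = sqnorm x.
Proof. by rewrite -scaleN1r sqnormZ /cabs normrN1 expr1n mul1r. Qed.

Lemma sqnormD x y :
  sqnorm (x + y) = sqnorm x + sqnorm y + 2 * complex.Re (q x y).
Proof.
rewrite /sqnorm !sipDl !sipDr [q y x]sip_conj !raddfD /=.
have -> : complex.Re (q x y)^* = complex.Re (q x y) by case: (q x y).
lra.
Qed.

Lemma sqnorm_parallelogram x y :
  sqnorm (x + y) + sqnorm (x - y) = 2 * sqnorm x + 2 * sqnorm y.
Proof. rewrite !sqnormD sqnormN sipNr raddfN /=; lra. Qed.

Lemma sqnorm_add_scale u v t :
  sqnorm (u + (t%:C * q u v) *: v) =
  sqnorm u + 2 * t * cabs (q u v) ^+ 2 + t ^+ 2 * cabs (q u v) ^+ 2 * sqnorm v.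
Proof.
rewrite sqnormD sqnormZ sipZr cabsM cabs_real.
have -> : (t%:C * q u v)^* * q u v = (t * cabs (q u v) ^+ 2)%:C.
  by rewrite rmorphM /= conjC_real -mulrA [_^* * _]mulrC -cabs_sqr -rmorphM.
by rewrite /= exprMn real_normK ?num_real //; ring.
Qed.

Lemma sip_cauchy_schwarz u v : cabs (q u v) ^+ 2 <= sqnorm u * sqnorm v.
Proof.
apply: quadratic_ge0_le; rewrite ?sqnorm_ge0 ?sqr_ge0 // => t.
by rewrite -sqnorm_add_scale sqnorm_ge0.
Qed.

Lemma sip_null_l u v : sqnorm u = 0 -> q u v = 0.
Proof.
move=> u0; apply: cabs_eq0; apply/eqP; rewrite -sqrf_eq0 eq_le sqr_ge0 andbT.
by have := sip_cauchy_schwarz u v; rewrite u0 mul0r.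
Qed.

Lemma sqnorm_le_homogeneous (phi : W -> R) K :
  (forall c w, phi (c *: w) = cabs c ^+ 2 * phi w) ->
  (forall w, sqnorm w = 0 -> phi w = 0) ->
  (forall e, sqnorm e = 1 -> phi e <= K) ->
  forall w, phi w <= K * sqnorm w.
Proof.
move=> phiZ phi_null phi_unit w.
have [w0|wn0] := eqVneq (sqnorm w) 0; first by rewrite w0 phi_null // mulr0.
have wpos : 0 < sqnorm w by rewrite lt_def wn0 sqnorm_ge0.
set r := Num.sqrt (sqnorm w).
have rpos : 0 < r by rewrite sqrtr_gt0.
set e := (r^-1)%:C *: w.
have e_unit : sqnorm e = 1.
  by rewrite sqnormZ cabs_ge0_real ?invr_ge0 ?(ltW rpos) // exprVn sqr_sqrtr ?(ltW wpos) ?mulVf.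
have -> : w = r%:C *: e.
  by rewrite /e scalerA -rmorphM /= divff ?gt_eqF // scale1r.
rewrite phiZ sqnormZ cabs_ge0_real ?(ltW rpos) // e_unit mulr1 mulrC.
by rewrite ler_wpM2r ?sqr_ge0 ?phi_unit.
Qed.

Lemma sip_bombieri a b e : sqnorm e = 1 ->
  cabs (q a e) ^+ 2 + cabs (q b e) ^+ 2 <=
  Num.max (sqnorm a) (sqnorm b) + cabs (q a b).
Proof.
move=> e1.
set al := q a e; set be := q b e; set s := cabs al ^+ 2 + cabs be ^+ 2.
set M := Num.max _ _; set P := cabs (q a b).
have s_ge0 : 0 <= s by rewrite addr_ge0 ?sqr_ge0.
have P_ge0 : 0 <= P := cabs_ge0 _.
(* Cauchy-Schwarz for [w := conj(al) a + conj(be) b] against [e]. *)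
set w := al^* *: a + be^* *: b.
have cs : s ^+ 2 <= sqnorm w.
  have := sip_cauchy_schwarz w e.
  have -> : q w e = s%:C.
    by rewrite sipDl !sipZl rmorphD /= !cabs_sqr -/al -/be; ring.
  by rewrite cabs_ge0_real // e1 mulr1.
have w_le : sqnorm w <= s * (M + P).
  rewrite sqnormD !sqnormZ !cabsJ sipZl sipZr conjCK.
  have ReP : complex.Re (al^* * (be * q a b)) <= cabs al * cabs be * P.
    by apply: le_trans (Re_le_cabs _) _; rewrite !cabsM cabsJ mulrA.
  have aM : sqnorm a <= M by rewrite le_max lexx.
  have bM : sqnorm b <= M by rewrite le_max lexx orbT.
  have := sqr_ge0 (cabs al - cabs be).
  have := cabs_ge0 al; have := cabs_ge0 be.
  have := sqr_ge0 (cabs al); have := sqr_ge0 (cabs be).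
  rewrite /s; nra.
have [->|s_neq0] := eqVneq s 0; first by rewrite addr_ge0 ?le_max ?sqnorm_ge0.
have s_gt0 : 0 < s by rewrite lt_def s_neq0.
by rewrite -(ler_pM2l s_gt0) -expr2 (le_trans cs).
Qed.

End SemiInnerProduct.

Section PairSemiInnerProduct.
Variables (R : realType) (W : lmodType R[i]) (q : W -> W -> R[i]).
Hypothesis hq : is_semi_inner_product q.

Definition pair_sip (x z : W * W) : R[i] := q x.1 z.1 + q x.2 z.2.

Lemma pair_sip_sip : is_semi_inner_product pair_sip.
Proof.
split; first by move=> a x y z; rewrite /pair_sip /= !(sip_linl hq); ring.
split; first by move=> x y; rewrite /pair_sip rmorphD /= -!(sip_conj hq).
by move=> x; rewrite addr_ge0 ?(sip_ge0 hq).
Qed.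

Lemma sqnorm_pair z : sqnorm pair_sip z = sqnorm q z.1 + sqnorm q z.2.
Proof. by rewrite /sqnorm /pair_sip raddfD. Qed.

End PairSemiInnerProduct.


Section LinearOperator.
Variables (R : realType) (V : lmodType R[i]) (T : V -> V).
Hypothesis hT : is_linear_op T.

Lemma linop0 : T 0 = 0.
Proof. by have := hT (-1) 0 0; rewrite scaleN1r oppr0 add0r scaleN1r addNr. Qed.

Lemma linopD x y : T (x + y) = T x + T y.
Proof. by have := hT 1 x y; rewrite !scale1r. Qed.

Lemma linopZ a x : T (a *: x) = a *: T x.
Proof. by have := hT a x 0; rewrite !addr0 linop0 addr0. Qed.

Lemma linopB x y : T (x - y) = T x - T y.
Proof. by rewrite linopD -scaleN1r linopZ scaleN1r. Qed.

End LinearOperator.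

Section LinearFunctional.
Variables (R : realType) (V : lmodType R[i]) (f : V -> R[i]).
Hypothesis flin : forall a x y, f (a *: x + y) = a * f x + f y.

Lemma lfunB x y : f (x - y) = f x - f y.
Proof. by rewrite addrC -scaleN1r flin mulN1r addrC. Qed.

Lemma lfun0 : f 0 = 0.
Proof. by rewrite -(subrr 0) lfunB subrr. Qed.

Lemma lfunZ a x : f (a *: x) = a * f x.
Proof. by rewrite -[a *: x]addr0 flin lfun0 addr0. Qed.

End LinearFunctional.

Lemma eventually_inv_lt (R : realType) (e : R) : 0 < e ->
  exists N, forall n, (N <= n)%N -> n.+1%:R^-1 < e.
Proof.
move=> e_gt0; have eV_ge0 : 0 <= e^-1 by rewrite invr_ge0 ltW.
exists (Num.Def.archi_bound e^-1) => n Nn.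
rewrite -[e]invrK ltf_pV2 ?posrE ?invr_gt0 ?ltr0Sn //.
apply: lt_le_trans (archi_boundP eV_ge0) _.
by rewrite ler_nat (leq_trans Nn).
Qed.

Section Hilbert.
Variables (R : realType) (V : lmodType R[i]) (ip : V -> V -> R[i]).
Hypothesis Hip : is_inner_product ip.
Hypothesis Hcomp : is_complete ip.

Local Notation sqn := (sqnorm ip).

Lemma inner_product_sip : is_semi_inner_product ip.
Proof. by case: Hip => [h1 [h2 [h3 _]]]; split. Qed.
Local Notation hip := inner_product_sip.

Lemma sqnorm_eq0 x : sqn x = 0 -> x = 0.
Proof. by case: Hip => [_ [_ [_ h]]] x0; apply: h; rewrite (sip_sqnorm hip) x0. Qed.

Lemma ipnorm_ge0 x : 0 <= ipnorm ip x.
Proof. exact: sqrtr_ge0. Qed.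

Lemma ipnorm_eq0 x : ipnorm ip x <= 0 -> x = 0.
Proof.
move=> x0; apply: sqnorm_eq0; apply/le_anti; rewrite (sqnorm_ge0 hip) andbT.
by rewrite -sqrtr_eq0 eq_le sqrtr_ge0 andbT.
Qed.

Lemma ip_cauchy_schwarz u v : cabs (ip u v) <= ipnorm ip u * ipnorm ip v.
Proof.
rewrite -(ler_pXn2r (n := 2)) ?nnegrE ?cabs_ge0 ?mulr_ge0 ?ipnorm_ge0 //.
by rewrite exprMn !sqr_sqrtr ?(sqnorm_ge0 hip) ?(sip_cauchy_schwarz hip).
Qed.

Definition cvg_to (u : nat -> V) (l : V) : Prop :=
  forall e : R, 0 < e -> exists N : nat, forall n : nat,
    (N <= n)%N -> ipnorm ip (u n - l) < e.

Definition cauchy_seq (u : nat -> V) : Prop :=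
  forall e : R, 0 < e -> exists N : nat, forall m n : nat,
    (N <= m)%N -> (N <= n)%N -> ipnorm ip (u m - u n) < e.

Lemma cvg_to_sqnorm u l : cvg_to u l ->
  forall e, 0 < e -> exists N, forall n, (N <= n)%N -> sqn (u n - l) < e.
Proof.
move=> ul e e_gt0; have /ul [N HN] : 0 < Num.sqrt e by rewrite sqrtr_gt0.
by exists N => n Nn; move: (HN n Nn); rewrite /ipnorm ltr_sqrt.
Qed.

Lemma cvg_to_bound_le0 u l (a K : R) :
  cvg_to u l -> (forall n, a <= K * ipnorm ip (u n - l)) -> a <= 0.
Proof.
move=> ul aK; apply/ler_addgt0Pr => e e_gt0; rewrite add0r.
have K1_gt0 : 0 < `|K| + 1 by rewrite ltr_pwDr ?normr_ge0.
have [N HN] := ul _ (divr_gt0 e_gt0 K1_gt0).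
have := HN N (leqnn N); rewrite ltr_pdivlMr // => uN.
have := aK N; have := ipnorm_ge0 (u N - l); have := ler_norm K; nra.
Qed.

Lemma sqnorm_limit_le x p u (d : R) : cvg_to u p ->
  (forall n, sqn (x - u n) < d + n.+1%:R^-1) -> sqn (x - p) <= d.
Proof.
move=> up near; apply/ler_addgt0Pr => e e_gt0.
have d1_gt0 : 0 < `|d| + 1 by rewrite ltr_pwDr ?normr_ge0.
have [N1 HN1] := eventually_inv_lt (divr_gt0 e_gt0 (ltr0n R 3)).
have [N2 HN2] := cvg_to_sqnorm up (divr_gt0 e_gt0 (ltr0n R 3)).
have e6_gt0 : 0 < (e / 6) ^+ 2 / (`|d| + 1) by rewrite divr_gt0 ?exprn_gt0 ?divr_gt0.
have [N3 HN3] := cvg_to_sqnorm up e6_gt0.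
set n := (N1 + N2 + N3)%N.
have s_lt := HN2 n (leq_trans (leq_addl N1 N2) (leq_addr N3 _)).
have s_lt' := HN3 n (leq_addl _ N3).
have a_le1 : n.+1%:R^-1 <= 1 :> R by rewrite invf_le1 ?ler1n ?ltr0Sn.
(* [1/(n+1)] is generalized so that [lra] sees it as a single atom. *)
move: (near n) (HN1 n (leq_trans (leq_addr N2 N1) (leq_addr N3 _))) a_le1.
move: (n.+1%:R^-1) => a y_lt a_lt a_le1.
have -> : x - p = (x - u n) + (u n - p) by rewrite addrA subrK.
rewrite (sqnormD hip); set c := ip _ _.
have c_lt : cabs c < e / 6.
  rewrite -(ltr_pXn2r (n := 2)) ?nnegrE ?cabs_ge0 ?divr_ge0 ?ltW //.
  apply: le_lt_trans (sip_cauchy_schwarz hip _ _) _.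
  rewrite ltr_pdivlMr // in s_lt'; apply: le_lt_trans s_lt'.
  rewrite [sqn _ * _]mulrC ler_wpM2l ?(sqnorm_ge0 hip) //.
  by have := ler_norm d; lra.
by have := Re_le_cabs c; lra.
Qed.

Definition closed_subspace (M : V -> Prop) : Prop :=
  M 0 /\ (forall (a : R[i]) x y, M x -> M y -> M (a *: x + y)) /\
  (forall u l, (forall n, M (u n)) -> cvg_to u l -> M l).

Lemma minimizer_orthogonal (M : V -> Prop) x p :
  (forall (a : R[i]) y z, M y -> M z -> M (a *: y + z)) -> M p ->
  (forall m, M m -> sqn (x - p) <= sqn (x - m)) ->
  forall m, M m -> ip (x - p) m = 0.
Proof.
move=> Mlin Mp p_min m Mm; set c := ip (x - p) m.
apply: cabs_eq0; apply/eqP; rewrite -sqrf_eq0 eq_le sqr_ge0 andbT.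
rewrite -(mul0r (sqn m)); apply: quadratic_ge0_le; rewrite ?sqr_ge0 ?(sqnorm_ge0 hip) // => t.
have := p_min _ (Mlin (- (t%:C * c)) m p Mm Mp).
have -> : x - (- (t%:C * c) *: m + p) = (x - p) + (t%:C * c) *: m.
  by rewrite scaleNr opprD opprK addrA addrAC.
rewrite (sqnorm_add_scale hip); lra.
Qed.

Section Projection.
Variables (M : V -> Prop) (x : V).
Hypothesis hM : closed_subspace M.

Let d := inf [set sqn (x - m) | m in M]%classic.

Lemma inf_dist_le m : M m -> d <= sqn (x - m).
Proof.
move=> Mm; apply: ge_inf; last by exists m.
by exists 0 => _ [m' _ <-]; apply: (sqnorm_ge0 hip).
Qed.

Lemma near_minimizer n : exists m, M m /\ sqn (x - m) < d + n.+1%:R^-1.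
Proof.
have inf_x : has_inf [set sqn (x - m) | m in M]%classic.
  split; first by exists (sqn (x - 0)), 0 => //; case: hM.
  by exists 0 => _ [m' _ <-]; apply: (sqnorm_ge0 hip).
have eps_gt0 : 0 < n.+1%:R^-1 :> R by rewrite invr_gt0.
have [_ [m Mm <-] ?] := inf_adherent eps_gt0 inf_x.
by exists m.
Qed.

Lemma minimizing_sqnorm_sub_le m1 m2 : M m1 -> M m2 ->
  sqn (m1 - m2) <= 2 * (sqn (x - m1) - d) + 2 * (sqn (x - m2) - d).
Proof.
case: hM => [M0 [Mlin _]] Mm1 Mm2.
set mid := (2^-1 : R[i]) *: (m1 + m2).
have Mmid : M mid.
  have := Mlin 1 m1 m2 Mm1 Mm2; rewrite scale1r => M12.
  by have := Mlin (2^-1) _ 0 M12 M0; rewrite addr0.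
have := sqnorm_parallelogram hip (x - m2) (x - m1).
have -> : x - m2 - (x - m1) = m1 - m2 by rewrite opprB addrC addrA subrK.
have -> : x - m2 + (x - m1) = (2 : R[i]) *: (x - mid).
  rewrite /mid scalerBr scalerA divff ?pnatr_eq0 // scale1r.
  by rewrite scaler_nat mulr2n addrACA -opprD [m2 + _]addrC.
rewrite (sqnormZ hip) cabs_natr.
have := inf_dist_le Mmid; lra.
Qed.

Lemma near_minimizer_cauchy ms : (forall n, M (ms n)) ->
  (forall n, sqn (x - ms n) < d + n.+1%:R^-1) -> cauchy_seq ms.
Proof.
move=> Mms near e e_gt0.
have e4_gt0 : 0 < e ^+ 2 / 4 by rewrite divr_gt0 // exprn_gt0.
have [N HN] := eventually_inv_lt e4_gt0.
exists N => m n Nm Nn.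
have sqn_lt : sqn (ms m - ms n) < e ^+ 2.
  apply: le_lt_trans (minimizing_sqnorm_sub_le (Mms m) (Mms n)) _.
  move: (near m) (near n) (HN m Nm) (HN n Nn).
  by move: (m.+1%:R^-1) (n.+1%:R^-1) => a b; lra.
by rewrite -(ltr_pXn2r (n := 2)) ?nnegrE ?ipnorm_ge0 ?ltW // sqr_sqrtr ?(sqnorm_ge0 hip).
Qed.

Lemma projection_exists : exists p, M p /\ forall m, M m -> ip (x - p) m = 0.
Proof.
have [ms ms_spec] := choice near_minimizer.
have Mms n : M (ms n) by case: (ms_spec n).
have near n : sqn (x - ms n) < d + n.+1%:R^-1 by case: (ms_spec n).
have [p msp] := Hcomp (near_minimizer_cauchy Mms near).
case: hM => [_ [Mlin Mclosed]]; have Mp := Mclosed _ _ Mms msp.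
exists p; split => //; apply: minimizer_orthogonal => // m Mm.
exact: le_trans (sqnorm_limit_le msp near) (inf_dist_le Mm).
Qed.

End Projection.

Lemma kernel_closed (T : V -> V) : is_bounded_op ip T ->
  closed_subspace (fun x => T x = 0).
Proof.
case=> Tlin [K TK]; split; first exact: linop0.
split; first by move=> a x y Tx Ty; rewrite Tlin Tx Ty scaler0 addr0.
move=> u l Tu ul; apply: ipnorm_eq0; apply: (cvg_to_bound_le0 ul) => n.
have <- : ipnorm ip (T (u n - l)) = ipnorm ip (T l).
  by rewrite (linopB Tlin) Tu sub0r /ipnorm -/(sqn _) (sqnormN hip).
exact: TK.
Qed.

Lemma functional_kernel_closed (f : V -> R[i]) K :
  (forall a x y, f (a *: x + y) = a * f x + f y) ->
  (forall x, cabs (f x) <= K * ipnorm ip x) ->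
  closed_subspace (fun x => f x = 0).
Proof.
move=> flin fK; split; first exact: lfun0.
split; first by move=> a x y fx fy; rewrite flin fx fy mulr0 addr0.
move=> u l fu ul; apply: cabs_eq0; apply/le_anti; rewrite cabs_ge0 andbT.
apply: (cvg_to_bound_le0 ul) => n.
have <- : cabs (f (u n - l)) = cabs (f l) by rewrite lfunB // fu sub0r /cabs normrN.
exact: fK.
Qed.

Lemma riesz_representation (f : V -> R[i]) K :
  (forall a x y, f (a *: x + y) = a * f x + f y) ->
  (forall x, cabs (f x) <= K * ipnorm ip x) ->
  exists y, forall x, f x = ip x y.
Proof.
move=> flin fK.
have [[x0 fx0]|f_eq0] := pselect (exists x0, f x0 != 0); last first.
  exists 0 => x; rewrite (sip0r hip).
  by apply/eqP; apply: contra_notT f_eq0 => ?; exists x.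
have [p [fp p_orth]] := projection_exists x0 (functional_kernel_closed flin fK).
set z := x0 - p.
have fz : f z = f x0 by rewrite lfunB // fp subr0.
have zz_neq0 : ip z z != 0.
  apply: contraNneq fx0 => zz0; rewrite -fz.
  have -> : z = 0 by apply: sqnorm_eq0; rewrite /sqnorm zz0.
  by rewrite lfun0.
have zz_real : (ip z z)^* = ip z z by rewrite (sip_sqnorm hip) conjC_real.
exists ((f z / ip z z)^* *: z) => x.
set c := f x / f z.
have /p_orth : f (x - c *: z) = 0.
  by rewrite lfunB // lfunZ // /c divfK ?fz // subrr.
rewrite -/z (sipBr hip) (sipZr hip) => /eqP; rewrite subr_eq0 => /eqP zx.
rewrite (sipZr hip) conjCK [ip x z](sip_conj hip) zx rmorphM /= conjCK zz_real /c.
by field; rewrite fz fx0 zz_neq0.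
Qed.

Lemma adjoint_spec S : is_bounded_op ip S ->
  forall x y, ip (S x) y = ip x (adjoint ip S y).
Proof.
case=> Slin [K SK].
have repr y : exists y', forall x, ip (S x) y = ip x y'.
  apply: (riesz_representation (K := K * ipnorm ip y)).
    by move=> a x z; rewrite Slin (sip_linl hip).
  move=> x; apply: le_trans (ip_cauchy_schwarz _ _) _.
  by rewrite mulrAC ler_wpM2r ?ipnorm_ge0.
have [T T_spec] := choice repr.
have ex : exists T : V -> V, forall x y, ip (S x) y = ip x (T y).
  by exists T => x y; exact: T_spec.
exact: (ClassicalEpsilon.epsilon_spec _ _ ex).
Qed.

Lemma mp_inverse_range (A : V -> V) : is_bounded_op ip A ->
  forall v, A (mp_inverse ip A (A v)) = A v.
Proof.
move=> hA v; have Alin := hA.1.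
have [p [Ap p_orth]] := projection_exists v (kernel_closed hA).
have ex : exists u, (forall n, A n = 0 -> ip u n = 0) /\
                    (forall z, ip (A u - A v) (A z) = 0).
  exists (v - p); split=> [n /p_orth //|z].
  by rewrite (linopB Alin) Ap subr0 subrr (sip0l hip).
(* The chosen [u] has [A u - A v] orthogonal to [A (u - v)], i.e. to itself. *)
have [_ u_spec] := ClassicalEpsilon.epsilon_spec (inhabits (0 : V)) _ ex.
apply/eqP; rewrite -subr_eq0; apply/eqP; apply: sqnorm_eq0.
by rewrite /sqnorm -{2}(linopB Alin) u_spec.
Qed.

Lemma positive_op_selfadjoint (A : V -> V) : is_positive_op ip A ->
  forall x y, ip (A x) y = ip x (A y).
Proof.
case=> [[Alin _] A_ge0] x y; apply/eqP; rewrite -subr_eq0; apply/eqP.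
apply: (sesquilinear_diag_eq0 (h := fun x y => ip (A x) y - ip x (A y))) => {x y}.
- by move=> a x y z; rewrite Alin !(sip_linl hip); ring.
- by move=> a x y z; rewrite Alin !(sipDr hip) !(sipZr hip); ring.
- by move=> w; rewrite [ip w _](sip_conj hip) (ge0_complex_real (A_ge0 w)) conjC_real subrr.
Qed.

End Hilbert.

Section ASemiInnerProduct.
Variables (R : realType) (V : lmodType R[i]) (ip : V -> V -> R[i]) (A : V -> V).
Hypothesis Hip : is_inner_product ip.
Hypothesis Hcomp : is_complete ip.
Hypothesis HA : is_positive_op ip A.

Local Notation hip := (inner_product_sip Hip).
Local Notation qA := (ipA ip A).
Local Notation sqnA := (sqnorm (ipA ip A)).

Lemma ipA_sip : is_semi_inner_product qA.
Proof.
have Aself := positive_op_selfadjoint Hip HA; case: HA => [[Alin _] A_ge0].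
split; first by move=> a x y z; rewrite /ipA Alin (sip_linl hip).
by split=> // x y; rewrite /ipA Aself (sip_conj hip).
Qed.

Lemma ipA_congr u u' v v' : A u = A u' -> A v = A v' -> qA u v = qA u' v'.
Proof.
have Aself := positive_op_selfadjoint Hip HA.
by move=> Au Av; rewrite /ipA Au Aself Av -Aself.
Qed.

Lemma ipA0_sip : is_semi_inner_product (ipA0 ip A).
Proof. exact: (pair_sip_sip ipA_sip). Qed.

Lemma sqnormA0 z : sqnorm (ipA0 ip A) z = sqnA z.1 + sqnA z.2.
Proof. exact: sqnorm_pair. Qed.

Lemma normA_eq1 z : normA ip A z = 1 <-> sqnA z = 1.
Proof. exact: (sqrt_sqnorm_eq1 ipA_sip). Qed.

Lemma normA0_eq1 z : normA0 ip A z = 1 <-> sqnorm (ipA0 ip A) z = 1.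
Proof. exact: (sqrt_sqnorm_eq1 ipA0_sip). Qed.

Lemma omegaA_ge0 T : 0 <= omegaA ip A T.
Proof. by apply: sup_ge0 => _ [z _ <-]; exact: cabs_ge0. Qed.

Lemma omegaA0_ge0 T : 0 <= omegaA0 ip A T.
Proof. by apply: sup_ge0 => _ [z _ <-]; exact: cabs_ge0. Qed.

Lemma omegaA_le T (phi : V -> R) K :
  (forall w, qA (T w) w = (phi w)%:C) ->
  (forall c w, phi (c *: w) = cabs c ^+ 2 * phi w) ->
  (forall w, `|phi w| <= K * sqnA w) ->
  forall w, `|phi w| <= omegaA ip A T * sqnA w.
Proof.
move=> Tphi phiZ phiK.
have radius_phi e : complex.Re `|qA (T e) e| = `|phi e|.
  by rewrite -/(cabs _) Tphi cabs_real.
apply: (sqnorm_le_homogeneous ipA_sip) => [c w|w w0|e e1].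
- by rewrite phiZ normrM ger0_norm ?sqr_ge0.
- by apply/le_anti; rewrite normr_ge0 andbT; have := phiK w; rewrite w0 mulr0.
apply: sup_upper_bound; last by exists e; [exact/normA_eq1 | exact: radius_phi].
split; first by exists `|phi e|, e; [exact/normA_eq1 | exact: radius_phi].
exists K => _ [z /normA_eq1 z1 <-]; rewrite radius_phi.
by have := phiK z; rewrite z1 mulr1.
Qed.

Section AAdjoint.
Variables (S X : V -> V).
Hypotheses (hS : is_bounded_op ip S) (hX : is_bounded_op ip X).
Hypothesis hSX : forall x y, qA (S x) y = qA x (X y).
Local Set Default Proof Using "All".

Lemma sharpA_A x : A (sharpA ip A S x) = A (X x).
Proof.
have Aself := positive_op_selfadjoint Hip HA.
rewrite /sharpA; have -> : adjoint ip S (A x) = A (X x).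
  apply/eqP; rewrite -subr_eq0; apply/eqP; apply: (sqnorm_eq0 Hip).
  rewrite /sqnorm (sipBr hip) -(adjoint_spec Hip Hcomp hS) -Aself.
  by rewrite -/(ipA ip A _ _) hSX /ipA Aself subrr.
by apply: (mp_inverse_range Hip Hcomp); case: HA.
Qed.

Lemma ipA_sharpl a v : qA (sharpA ip A S a) v = qA a (S v).
Proof.
rewrite (ipA_congr (sharpA_A a) (erefl (A v))).
by rewrite (sip_conj ipA_sip) -hSX -(sip_conj ipA_sip).
Qed.

Let P w := sharpA ip A S (S w).

Lemma ipA_graml w v : qA (P w) v = qA (S w) (S v).
Proof. exact: ipA_sharpl. Qed.

Lemma ipA_gramr u v : qA u (P v) = qA (S u) (S v).
Proof. by rewrite (sip_conj ipA_sip) ipA_graml -(sip_conj ipA_sip). Qed.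

Lemma ipA_gram_diag w : qA (P w) w = (sqnA (S w))%:C.
Proof. by rewrite ipA_graml (sip_sqnorm ipA_sip). Qed.

Lemma ipA_gram2_diag w : qA (P (P w)) w = (sqnA (P w))%:C.
Proof. by rewrite ipA_graml -ipA_gramr (sip_sqnorm ipA_sip). Qed.

Lemma sqnormA_opZ c w : sqnA (S (c *: w)) = cabs c ^+ 2 * sqnA (S w).
Proof. by rewrite (linopZ hS.1) (sqnormZ ipA_sip). Qed.

Lemma sqnormA_gramZ c w : sqnA (P (c *: w)) = cabs c ^+ 2 * sqnA (P w).
Proof.
have PZ : A (P (c *: w)) = A (c *: P w).
  by rewrite /P sharpA_A (linopZ hS.1) (linopZ hX.1) !(linopZ HA.1.1) sharpA_A.
by rewrite -(sqnormZ ipA_sip) /sqnorm (ipA_congr PZ PZ).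
Qed.

Lemma sqnormA_op_le (L : R) : (forall e, sqnA e = 1 -> sqnA (S e) <= L) ->
  forall w, sqnA (S w) <= L * sqnA w.
Proof.
move=> S_unit; apply: (sqnorm_le_homogeneous ipA_sip) => //; first exact: sqnormA_opZ.
by move=> w w0; rewrite /sqnorm -ipA_gramr (sip_null_l ipA_sip).
Qed.

Lemma sqnormA_gram_le (L : R) : 0 <= L -> (forall e, sqnA e = 1 -> sqnA (S e) <= L) ->
  forall w, sqnA (P w) <= L ^+ 2 * sqnA w.
Proof.
move=> L_ge0 /sqnormA_op_le S_le w.
have Pw_ge0 := sqnorm_ge0 ipA_sip (P w).
(* Cauchy-Schwarz on sqnA (P w) = <S w, S (P w)>_A. *)
have cs := sip_cauchy_schwarz ipA_sip (S w) (S (P w)).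
rewrite -ipA_graml (sip_sqnorm ipA_sip) cabs_ge0_real // in cs.
have [->|Pw_neq0] := eqVneq (sqnA (P w)) 0.
  by rewrite mulr_ge0 ?sqr_ge0 ?(sqnorm_ge0 ipA_sip).
have Pw_gt0 : 0 < sqnA (P w) by rewrite lt_def Pw_neq0.
rewrite -(ler_pM2r Pw_gt0) -expr2; apply: (le_trans cs).
apply: le_trans (ler_pM _ _ (S_le w) (S_le (P w))) _; rewrite ?(sqnorm_ge0 ipA_sip) //.
by rewrite mulrACA -expr2 mulrA.
Qed.

Lemma omegaA_gram_le (L : R) T (a b : R) : 0 <= L ->
  (forall e, sqnA e = 1 -> sqnA (S e) <= L) -> `|a| <= 1 -> `|b| <= 1 ->
  (forall w, qA (T w) w = (a * sqnA (P w) + b * sqnA (S w))%:C) ->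
  forall w, `|a * sqnA (P w) + b * sqnA (S w)| <= omegaA ip A T * sqnA w.
Proof.
move=> L_ge0 S_unit a1 b1 Tw; apply: (omegaA_le (K := L ^+ 2 + L)) => // [c w|w].
  by rewrite sqnormA_gramZ sqnormA_opZ; ring.
have P_le := sqnormA_gram_le L_ge0 S_unit w; have S_le := sqnormA_op_le S_unit w.
have P_ge0 := sqnorm_ge0 ipA_sip (P w); have S_ge0 := sqnorm_ge0 ipA_sip (S w).
apply: le_trans (ler_normD _ _) _; rewrite !normrM (ger0_norm P_ge0) (ger0_norm S_ge0).
have := ler_wpM2r P_ge0 a1; have := ler_wpM2r S_ge0 b1; lra.
Qed.

End AAdjoint.

Local Notation qA0 := (ipA0 ip A).
Local Notation sqnA0 := (sqnorm (ipA0 ip A)).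

Lemma normA0_exp4 z : normA0 ip A z ^+ 4 = sqnA0 z ^+ 2.
Proof. by rewrite (exprM _ 2 2) sqr_sqrtr // (sqnorm_ge0 ipA0_sip). Qed.

Lemma sqnormA0_le_dw_ub (X : V * V -> V * V) L :
  ubound [set Num.sqrt (complex.Re `|qA0 (X z) z| ^+ 2 + normA0 ip A (X z) ^+ 4)
         | z in [set z | normA0 ip A z = 1]]%classic L ->
  forall z, sqnA0 z = 1 -> sqnA0 (X z) <= `|L|.
Proof.
move=> L_ub z z1; apply: le_trans (ler_norm L); apply: le_trans (L_ub _ _); last first.
  by exists z; [exact/normA0_eq1 | reflexivity].
rewrite normA0_exp4 -[X in X <= _](@ger0_norm _ (sqnA0 (X z))) ?(sqnorm_ge0 ipA0_sip) //.
by rewrite -sqrtr_sqr ler_sqrt ?lerDr ?sqr_ge0 // addr_ge0 ?sqr_ge0.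
Qed.

Section OffDiagonal.
Variables B C XB XC : V -> V.
Hypotheses (hB : is_bounded_op ip B) (hXB : is_bounded_op ip XB).
Hypothesis hBX : forall x y, qA (B x) y = qA x (XB y).
Hypotheses (hC : is_bounded_op ip C) (hXC : is_bounded_op ip XC).
Hypothesis hCX : forall x y, qA (C x) y = qA x (XC y).

Let CC x := sharpA ip A C (C x).
Let BB x := sharpA ip A B (B x).

Lemma ipA0_offdiag_gram z : qA0 (CC z.1, BB z.2) z = (sqnA0 (offdiag B C z))%:C.
Proof.
rewrite /ipA0 /= (ipA_gram_diag hC hXC hCX) (ipA_gram_diag hB hXB hBX).
by rewrite sqnormA0 -rmorphD addrC.
Qed.

Lemma ipA0_offdiag_cross z :
  qA0 (offdiag (fun x => CC (B x)) (fun x => BB (C x)) z) z =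
  qA0 (offdiag B C z) (CC z.1, BB z.2).
Proof.
by rewrite /ipA0 /= (ipA_graml hC hXC hCX) (ipA_gramr hC hXC hCX)
  (ipA_graml hB hXB hBX) (ipA_gramr hB hXB hBX).
Qed.

Variable L : R.
Hypothesis L_ge0 : 0 <= L.
Hypothesis offdiag_le : forall z, sqnA0 z = 1 -> sqnA0 (offdiag B C z) <= L.

Lemma sqnormA_C_unit_le e : sqnA e = 1 -> sqnA (C e) <= L.
Proof.
move=> e1; have := offdiag_le (z := (e, 0)).
rewrite !sqnormA0 /offdiag /= (linop0 hB.1) /sqnorm !(sip0l ipA_sip) /= addr0 add0r.
by apply.
Qed.

Lemma sqnormA_B_unit_le e : sqnA e = 1 -> sqnA (B e) <= L.
Proof.
move=> e1; have := offdiag_le (z := (0, e)).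
rewrite !sqnormA0 /offdiag /= (linop0 hC.1) /sqnorm !(sip0l ipA_sip) /= addr0 add0r.
by apply.
Qed.

Lemma omegaA_CC_le w :
  `|sqnA (CC w) + sqnA (C w)| <= omegaA ip A (fun x => CC (CC x) + CC x) * sqnA w /\
  `|sqnA (CC w) - sqnA (C w)| <= omegaA ip A (fun x => CC (CC x) - CC x) * sqnA w.
Proof.
have bound := omegaA_gram_le hC hXC hCX L_ge0 sqnormA_C_unit_le.
have one_le1 : `|1 : R| <= 1 by rewrite normr1.
have mone_le1 : `|-1 : R| <= 1 by rewrite normrN1.
split.
- have := bound _ 1 1 one_le1 one_le1 _ w; rewrite !mul1r; apply=> x.
  by rewrite (sipDl ipA_sip) (ipA_gram2_diag hC hXC hCX) (ipA_gram_diag hC hXC hCX) !mul1r rmorphD.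
- have := bound _ 1 (-1) one_le1 mone_le1 _ w; rewrite mul1r mulN1r; apply=> x.
  by rewrite (sipBl ipA_sip) (ipA_gram2_diag hC hXC hCX) (ipA_gram_diag hC hXC hCX) mul1r mulN1r rmorphB.
Qed.

Lemma omegaA_BB_le w :
  `|sqnA (B w) + sqnA (BB w)| <= omegaA ip A (fun x => BB x + BB (BB x)) * sqnA w /\
  `|sqnA (B w) - sqnA (BB w)| <= omegaA ip A (fun x => BB x - BB (BB x)) * sqnA w.
Proof.
have bound := omegaA_gram_le hB hXB hBX L_ge0 sqnormA_B_unit_le.
have one_le1 : `|1 : R| <= 1 by rewrite normr1.
have mone_le1 : `|-1 : R| <= 1 by rewrite normrN1.
split.
- have := bound _ 1 1 one_le1 one_le1 _ w; rewrite !mul1r addrC; apply=> x.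
  by rewrite (sipDl ipA_sip) (ipA_gram2_diag hB hXB hBX) (ipA_gram_diag hB hXB hBX) !mul1r addrC rmorphD.
- have := bound _ (-1) 1 mone_le1 one_le1 _ w; rewrite mul1r mulN1r addrC; apply=> x.
  by rewrite (sipBl ipA_sip) (ipA_gram2_diag hB hXB hBX) (ipA_gram_diag hB hXB hBX) mul1r mulN1r rmorphD rmorphN addrC.
Qed.

Lemma omegaA0_cross_le z : sqnA0 z = 1 ->
  cabs (qA0 (offdiag B C z) (CC z.1, BB z.2)) <=
  omegaA0 ip A (offdiag (fun x => CC (B x)) (fun x => BB (C x))).
Proof.
move=> z1; rewrite -ipA0_offdiag_cross.
apply: sup_upper_bound; last by exists z; [exact/normA0_eq1|].
split; first by exists (cabs (qA0 (offdiag (fun x => CC (B x)) (fun x => BB (C x)) z) z)), z;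
  [exact/normA0_eq1|].
exists (1 + L * L ^+ 2) => _ [u /normA0_eq1 u1 <-]; rewrite -/(cabs _) ipA0_offdiag_cross.
have gram_le : sqnA0 (CC u.1, BB u.2) <= L ^+ 2.
  rewrite sqnormA0 -[L ^+ 2]mulr1 -u1 sqnormA0 mulrDr /=.
  apply: lerD; first exact: (sqnormA_gram_le hC hXC hCX L_ge0 sqnormA_C_unit_le).
  exact: (sqnormA_gram_le hB hXB hBX L_ge0 sqnormA_B_unit_le).
have cs := sip_cauchy_schwarz ipA0_sip (offdiag B C u) (CC u.1, BB u.2).
have := ler_pM (sqnorm_ge0 ipA0_sip _) (sqnorm_ge0 ipA0_sip _) (offdiag_le u1) gram_le.
have := cabs_ge0 (qA0 (offdiag B C u) (CC u.1, BB u.2)); nra.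
Qed.

Lemma offdiag_max_le z : sqnA0 z = 1 ->
  Num.max (sqnA0 (offdiag B C z)) (sqnA0 (CC z.1, BB z.2)) <=
    2^-1 * Num.max (omegaA ip A (fun x => CC (CC x) + CC x))
                   (omegaA ip A (fun x => BB x + BB (BB x)))
  + 2^-1 * Num.max (omegaA ip A (fun x => CC (CC x) - CC x))
                   (omegaA ip A (fun x => BB x - BB (BB x))).
Proof.
rewrite sqnormA0 => z1; rewrite maxr_absE !sqnormA0 /=.
have [C_add C_sub] := omegaA_CC_le z.1; have [B_add B_sub] := omegaA_BB_le z.2.
set P1 := omegaA ip A (fun x => CC (CC x) + CC x) in C_add *.
set P2 := omegaA ip A (fun x => BB x + BB (BB x)) in B_add *.
set M1 := omegaA ip A (fun x => CC (CC x) - CC x) in C_sub *.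
set M2 := omegaA ip A (fun x => BB x - BB (BB x)) in B_sub *.
have q1 := sqnorm_ge0 ipA_sip z.1; have q2 := sqnorm_ge0 ipA_sip z.2.
have hP1 : P1 * sqnA z.1 <= Num.max P1 P2 * sqnA z.1 by rewrite ler_wpM2r // le_max lexx.
have hP2 : P2 * sqnA z.2 <= Num.max P1 P2 * sqnA z.2 by rewrite ler_wpM2r // le_max lexx orbT.
have hM1 : M1 * sqnA z.1 <= Num.max M1 M2 * sqnA z.1 by rewrite ler_wpM2r // le_max lexx.
have hM2 : M2 * sqnA z.2 <= Num.max M1 M2 * sqnA z.2 by rewrite ler_wpM2r // le_max lexx orbT.
have sum1 c : c * sqnA z.1 + c * sqnA z.2 = c by rewrite -mulrDr z1 mulr1.
have := sum1 (Num.max P1 P2); have := sum1 (Num.max M1 M2).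
have := ler_norm (sqnA (CC z.1) + sqnA (C z.1)).
have := ler_norm (sqnA (B z.2) + sqnA (BB z.2)).
have := ler_normB (sqnA (B z.2) - sqnA (BB z.2)) (sqnA (CC z.1) - sqnA (C z.1)).
have -> : sqnA (B z.2) - sqnA (BB z.2) - (sqnA (CC z.1) - sqnA (C z.1)) =
  sqnA (B z.2) + sqnA (C z.1) - (sqnA (CC z.1) + sqnA (BB z.2)) by ring.
lra.
Qed.

Lemma dwA0_offdiag_pointwise_le z : sqnA0 z = 1 ->
  cabs (qA0 (offdiag B C z) z) ^+ 2 + sqnA0 (offdiag B C z) ^+ 2 <=
    2^-1 * Num.max (omegaA ip A (fun x => CC (CC x) + CC x))
                   (omegaA ip A (fun x => BB x + BB (BB x)))
  + 2^-1 * Num.max (omegaA ip A (fun x => CC (CC x) - CC x))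
                   (omegaA ip A (fun x => BB x - BB (BB x)))
  + omegaA0 ip A (offdiag (fun x => CC (B x)) (fun x => BB (C x))).
Proof.
move=> z1; have := sip_bombieri ipA0_sip (offdiag B C z) (CC z.1, BB z.2) z1.
rewrite ipA0_offdiag_gram cabs_ge0_real ?(sqnorm_ge0 ipA0_sip) //.
have := offdiag_max_le z1; have := omegaA0_cross_le z1; lra.
Qed.

End OffDiagonal.
End ASemiInnerProduct.

Theorem theorem3p8 (R : realType) (V : lmodType R[i]) (ip : V -> V -> R[i])
    (A B C : V -> V) :
  is_hilbert ip ->
  is_positive_op ip A ->
  in_BA ip A B -> in_BA ip A C ->
  let CC := fun x => sharpA ip A C (C x) in
  let BB := fun x => sharpA ip A B (B x) in
  dwA0 ip A (offdiag B C) ^+ 2 <=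
    2^-1 * Num.max (omegaA ip A (fun x => CC (CC x) + CC x))
                   (omegaA ip A (fun x => BB x + BB (BB x)))
  + 2^-1 * Num.max (omegaA ip A (fun x => CC (CC x) - CC x))
                   (omegaA ip A (fun x => BB x - BB (BB x)))
  + omegaA0 ip A (offdiag (fun x => CC (B x)) (fun x => BB (C x))).
Proof.
move=> [Hip Hcomp] HA [hB [XB [hXB hBX]]] [hC [XC [hXC hCX]]].
cbv beta zeta; set rhs := (X in _ <= X).
have rhs_ge0 : 0 <= rhs.
  by rewrite !addr_ge0 ?mulr_ge0 ?invr_ge0 ?le_max ?omegaA_ge0 ?omegaA0_ge0.
rewrite /dwA0; set D := [set _ | _ in _]%classic.
have [[L L_ub]|D_unbounded] := pselect (has_ubound D); last first.
  by rewrite sup_out ?expr0n //; case.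
apply: sqr_sup_sqrt_le => // z /(normA0_eq1 Hip HA) z1.
rewrite (normA0_exp4 Hip HA) -/(cabs _).
apply: (dwA0_offdiag_pointwise_le Hip Hcomp HA hB hXB hBX hC hXC hCX (normr_ge0 L) _ z1).
exact: (sqnormA0_le_dw_ub Hip HA L_ub).
Qed.
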